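(* Let $n$ be even, and let $\mathbf{X}=\{X_{rj}:r,j=1,\dots,n\}$ be the switch variables of the standard lightbulb process, with $X_j=(\sum_{r=1}^nX_{rj})\bmod 2$ and $X=\sum_jX_j$. For each $i=1,\dots,n$ construct $\mathbf{X}^i$ as follows. Let $J^i$ have conditional distribution, given $\mathbf{X}$, uniform on $\{j: X_{n/2,j}=1-X_{n/2,i}\}$. If $X_i=1$ set $\mathbf{X}^i=\mathbf{X}$. Otherwise let $\mathbf{X}^i=\{X^i_{rj}\}$ with $X^i_{rj}=X_{rj}$ for $r\ne n/2$; $X^i_{n/2,j}=X_{n/2,j}$ for $j\notin\{i,J^i\}$; $X^i_{n/2,i}=X_{n/2,J^i}$; $X^i_{n/2,J^i}=X_{n/2,i}$ (i.e. the stage $n/2$ switch variables of bulbs $i$ and $J^i$ are interchanged). Let $X^i_j=(\sum_{r=1}^nX^i_{rj})\bmod 2$ and $X^i=\sum_{j=1}^nX^i_j$. Let $I$ be uniform on $\{1,\dots,n\}$, independent of all other variables. Then $X^s=X^I$ has the $X$-size bias distribution, and $$X^s-X=2\,\mathbf{1}_{\{X_I=0,\,X_{J^I}=0\}}\quad\text{and}\quad X\le X^s\le X+2.$$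
   Context: Standard lightbulb process: $n$ bulbs, all initially off, $n$ stages; at stage $r=1,\dots,n$ a uniformly random subset of exactly $r$ bulbs is toggled, independently across stages. The switch variable $X_{rj}\in\{0,1\}$ is $1$ iff bulb $j$ is toggled at stage $r$; thus $P(X_{rj}=e_{rj}\ \forall r,j)=\prod_{r=1}^n\binom{n}{r}^{-1}$ if $\sum_je_{rj}=r$ for all $r$, and $0$ otherwise. A random variable $X^s$ has the $X$-size bias distribution if $E[Xg(X)]=E[X]\,E[g(X^s)]$ for all bounded continuous $g$. *)

From HB Require Import structures.
From mathcomp Require Import all_boot all_order all_algebra.
From mathcomp Require Import all_classical all_reals topology normedtype.
Set Implicit Arguments. Unset Strict Implicit. Unset Printing Implicit Defensive.
Import Order.TTheory GRing.Theory Num.Theory.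
Import numFieldNormedType.Exports.
Local Open Scope ring_scope.

(* Conventions: stage r (1 <= r <= n) is indexed by r' : 'I_n with r = r'.+1;
   bulb j (1 <= j <= n) is indexed by j' : 'I_n with j = j'.+1.
   A switch configuration e assigns to stage r' and bulb j the value X_{r'+1, j+1}. *)
Definition config (n : nat) := {ffun 'I_n -> {ffun 'I_n -> bool}}.

Definition valid_config n (e : config n) : bool :=
  [forall r : 'I_n, (\sum_(j < n) e r j == r.+1)%N].

Definition switch_prob (R : realType) n (e : config n) : R :=
  if valid_config e then \prod_(r < n) ('C(n, r.+1)%:R)^-1 else 0.

(* switch variable at stage number s (1-based), bulb j *)
Definition stageval n (e : config n) (s : nat) (j : 'I_n) : bool :=
  if @insub _ (fun k => k < n)%N _ s.-1 is Some r then e r j else false.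

Definition bulb n (e : config n) (j : 'I_n) : nat := ((\sum_(r < n) e r j) %% 2)%N.

Definition Xtot n (e : config n) : nat := (\sum_(j < n) bulb e j)%N.

Definition Jset n (e : config n) (i : 'I_n) : {set 'I_n} :=
  [set j | stageval e (n %/ 2) j != stageval e (n %/ 2) i].

Definition swap_mid n (e : config n) (i j : 'I_n) : config n :=
  [ffun r : 'I_n => [ffun k : 'I_n =>
     if (r.+1 == n %/ 2)%N then
       (if k == i then e r j else if k == j then e r i else e r k)
     else e r k]].

(* joint sample space: (switch configuration, I, J^I) *)
Definition Omega n := (config n * 'I_n * 'I_n)%type.

Definition joint_prob (R : realType) n (w : Omega n) : R :=
  let: (e, i, j) := w in
  switch_prob R e * (n%:R)^-1 *
  (if j \in Jset e i then (#|Jset e i|%:R)^-1 else 0).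

Definition Xconf_s n (w : Omega n) : config n :=
  let: (e, i, j) := w in if (bulb e i == 1)%N then e else swap_mid e i j.

Definition Xw n (w : Omega n) : nat := Xtot w.1.1.
Definition Xsw n (w : Omega n) : nat := Xtot (Xconf_s w).

Definition Expect (R : realType) (T : finType) (P : T -> R) (f : T -> R) : R :=
  \sum_(w : T) P w * f w.

Definition size_bias_of (R : realType) (T : finType) (P : T -> R) (X Xs : T -> R) :=
  forall g : R -> R, continuous g -> (exists M : R, forall x, `|g x| <= M) ->
    Expect P (fun w => X w * g (X w)) = Expect P X * Expect P (fun w => g (Xs w)).

From HB Require Import structures.
From mathcomp Require Import all_boot all_order all_algebra all_fingroup.
From mathcomp Require Import all_classical all_reals topology normedtype.
From mathcomp Require Import zify ring.
Import Order.TTheory GRing.Theory Num.Theory.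
Local Open Scope ring_scope.
Set Implicit Arguments. Unset Strict Implicit. Unset Printing Implicit Defensive.

(* If bulb i is on, X^i = X.  Otherwise the stage-n/2 switches of i and J^i
   differ, so swapping them toggles exactly the bulbs i and J^i, and it keeps
   every stage toggling the right number of bulbs, hence preserves the law of
   the switches.  For fixed i the map (X, j) |-> (X swapped at i and j, j) is an
   involution of the admissible pairs exchanging "bulb i off" with "bulb i on";
   as J^i always ranges over n/2 bulbs, E[g(X^i)] = 2 E[X_i g(X)].  Averaging
   over i gives E[g(X^s)] = E[X g(X)] / (n/2), and g = 1 yields E[X] = n/2. *)

Definition lit n (e : config n) k : bool := odd (\sum_r e r k).

Lemma bulbE n (e : config n) k : bulb e k = lit e k.
Proof. by rewrite /bulb modn2. Qed.

Lemma even_half_add n : ~~ odd n -> (n %/ 2 + n %/ 2)%N = n.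
Proof. by move=> n_even; rewrite divn2 addnn -[RHS]odd_double_half (negbTE n_even). Qed.

Lemma even_half_gt0 n : ~~ odd n -> (0 < n)%N -> (0 < n %/ 2)%N.
Proof. by move=> /even_half_add n_halves; rewrite -{1}n_halves addn_gt0 orbb. Qed.

Section MiddleStage.
Variable n : nat.
Hypothesis mid_gt0 : (0 < n %/ 2)%N.

Lemma mid_lt : ((n %/ 2).-1 < n)%N.
Proof. by rewrite prednK // leq_div. Qed.

(* stage n/2, in the 0-based indexing of stages *)
Definition mid : 'I_n := Ordinal mid_lt.

Lemma stageval_mid (e : config n) k : stageval e (n %/ 2) k = e mid k.
Proof.
rewrite /stageval; case: insubP => [r _ def_r|]; last by rewrite mid_lt.
by congr (e _ k); apply: val_inj; rewrite def_r.
Qed.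

Lemma swap_midE (e : config n) i j r k :
  swap_mid e i j r k = e r (if r == mid then tperm i j k else k).
Proof.
rewrite !ffunE.
have -> : (r.+1 == n %/ 2)%N = (r == mid) by rewrite -val_eqE /= -(prednK mid_gt0).
case: (r == mid) => //.
case: tpermP => [->|->|/eqP/negbTE-> /eqP/negbTE->] //; rewrite ?eqxx //.
by case: eqVneq => [->|].
Qed.

Lemma swap_midK (e : config n) i j : swap_mid (swap_mid e i j) i j = e.
Proof.
by apply/ffunP => r; apply/ffunP => k; rewrite !swap_midE; case: (r == mid); rewrite ?tpermK.
Qed.

Lemma sum_swap_mid (e : config n) i j r :
  (\sum_k swap_mid e i j r k = \sum_k e r k)%N.
Proof.
under eq_bigr do rewrite swap_midE.
by case: (r == mid); rewrite // [RHS](reindex_inj (@perm_inj _ (tperm i j))).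
Qed.

Lemma valid_swap_mid (e : config n) i j :
  valid_config (swap_mid e i j) = valid_config e.
Proof. by apply: eq_forallb => r; rewrite sum_swap_mid. Qed.

Lemma Jset_swap_mid (e : config n) i j :
  (j \in Jset (swap_mid e i j) i) = (j \in Jset e i).
Proof. by rewrite !inE !stageval_mid !swap_midE eqxx tpermL tpermR eq_sym. Qed.

Lemma lit_swap_mid (e : config n) i j k : j \in Jset e i ->
  lit (swap_mid e i j) k = lit e k (+) ((k == i) || (k == j)).
Proof.
rewrite inE !stageval_mid => hij.
rewrite /lit (bigD1 mid) //= [in RHS](bigD1 mid) //= swap_midE eqxx.
have -> : (\sum_(r | r != mid) swap_mid e i j r k = \sum_(r | r != mid) e r k)%N.
  by apply: eq_bigr => r /negbTE r_mid; rewrite swap_midE r_mid.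
rewrite !oddD; case: tpermP => [->|->|/eqP/negbTE-> /eqP/negbTE->]; rewrite ?eqxx ?orbT ?addbF //.
all: by move: hij; case: (e mid i); case: (e mid j); rewrite //= ?addbT ?negbK.
Qed.

Lemma Jset_neq (e : config n) i j : j \in Jset e i -> i != j.
Proof. by rewrite inE; apply: contraNneq => ->. Qed.

Lemma Xtot_swap_mid (e : config n) i j : j \in Jset e i ->
  (Xtot (swap_mid e i j) + lit e i + lit e j = Xtot e + ~~ lit e i + ~~ lit e j)%N.
Proof.
move=> hj; have ij := Jset_neq hj.
rewrite /Xtot (bigD1 i) // (bigD1 j) 1?eq_sym //= [in RHS](bigD1 i) // [in RHS](bigD1 j) 1?eq_sym //=.
have -> : (\sum_(k | (k != i) && (k != j)) bulb (swap_mid e i j) k =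
           \sum_(k | (k != i) && (k != j)) bulb e k)%N.
  by apply: eq_bigr => k /andP[/negbTE ki /negbTE kj]; rewrite !bulbE (lit_swap_mid _ hj) ki kj addbF.
rewrite !bulbE !(lit_swap_mid _ hj) !eqxx orbT orTb /= !addbT.
set rest := (\sum_(k | _) bulb e k)%N.
by case: (lit e i); case: (lit e j) => /=; lia.
Qed.

Lemma Xtot_Xconf_s (e : config n) i j : j \in Jset e i ->
  Xtot (Xconf_s (e, i, j)) = (Xtot e + 2 * (~~ lit e i && ~~ lit e j))%N.
Proof.
move=> hj; rewrite /= bulbE; move: (Xtot_swap_mid hj).
case: (lit e i); case: (lit e j); move: (Xtot (swap_mid e i j)) (Xtot e) => /= x y; lia.
Qed.

Lemma sum_swap_mid_flip (V : nmodType) i (F : config n -> V) :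
  \sum_e \sum_j (if (j \in Jset e i) && ~~ lit e i then F (swap_mid e i j) else 0) =
  \sum_e \sum_j (if (j \in Jset e i) && lit e i then F e else 0).
Proof.
pose swap_pair (q : config n * 'I_n) := (swap_mid q.1 i q.2, q.2).
have swap_pairK : involutive swap_pair by move=> [e j]; rewrite /swap_pair /= swap_midK.
rewrite !pair_bigA (reindex_inj (inv_inj swap_pairK)); apply: eq_bigr => -[e j] _ /=.
rewrite Jset_swap_mid swap_midK; case hj: (j \in Jset e i) => //=.
by rewrite lit_swap_mid // eqxx addbT negbK.
Qed.

End MiddleStage.

Lemma sum_nat_of_bool (T : finType) (b : pred T) : (\sum_x b x)%N = #|b|.
Proof.
by rewrite -sum1_card [RHS]big_mkcond; apply: eq_bigr => x _; rewrite unfold_in; case: (b x).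
Qed.

Lemma Jset_card n (n_even : ~~ odd n) (n_pos : (0 < n)%N) (e : config n) i :
  valid_config e -> #|Jset e i| = (n %/ 2)%N.
Proof.
have mid_gt0 := even_half_gt0 n_even n_pos.
move=> /forallP /(_ (mid mid_gt0)) /eqP; rewrite prednK // sum_nat_of_bool => card_on.
have card_off := cardsC [set k | e (mid mid_gt0) k].
rewrite cardsE card_on card_ord in card_off.
have -> : Jset e i = if e (mid mid_gt0) i then ~: [set k | e (mid mid_gt0) k]
                     else [set k | e (mid mid_gt0) k].
  apply/setP => k; rewrite !inE !(stageval_mid mid_gt0).
  by case: (e _ i); rewrite !inE //; case: (e _ k).
case: (e _ i); last by rewrite cardsE.
by move/(canRL (addKn _)): card_off => ->; rewrite -{1}(even_half_add n_even) addnK.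
Qed.

Lemma card_ffun_sum n k :
  (\sum_(f : {ffun 'I_n -> bool}) (\sum_j f j == k))%N = 'C(n, k).
Proof.
rewrite (reindex (fun A : {set 'I_n} => [ffun j => j \in A])) /=; last first.
  exists (fun f : {ffun 'I_n -> bool} => [set j | f j]) => [A _ | f _].
    by apply/setP => j; rewrite inE ffunE.
  by apply/ffunP => j; rewrite ffunE inE.
under eq_bigr => A _ do under eq_bigr do rewrite ffunE.
rewrite sum_nat_of_bool -[n in 'C(n, _)]card_ord -card_draws -cardsE.
by apply: eq_card => A; rewrite !inE unfold_in sum_nat_of_bool.
Qed.

Lemma card_valid_config n :
  (\sum_(e : config n) valid_config e)%N = (\prod_(r < n) 'C(n, r.+1))%N.
Proof.
under [RHS]eq_bigr => r _ do rewrite -card_ffun_sum.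
rewrite bigA_distr_bigA; apply: eq_bigr => e _.
case: (boolP (valid_config e)) => [/forallP valid_e | /forallPn[r /negbTE bad_r]].
  by rewrite big1 // => r _; rewrite valid_e.
by rewrite (bigD1 r) //= bad_r.
Qed.

Lemma sum_switch_prob (R : realType) n : \sum_(e : config n) switch_prob R e = 1.
Proof.
have binom_neq0 : (\prod_(r < n) 'C(n, r.+1)%:R : R) != 0.
  by rewrite prodf_seq_neq0; apply/allP => r _ /=; rewrite pnatr_eq0 -lt0n bin_gt0.
rewrite (eq_bigr (fun e => (valid_config e)%:R * \prod_(r < n) ('C(n, r.+1)%:R)^-1)); last first.
  by move=> e _; rewrite /switch_prob; case: ifP; rewrite ?mul1r ?mul0r.
by rewrite -mulr_suml -natr_sum card_valid_config natr_prod prodfV mulfV.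
Qed.

Lemma sum_pairE (V : nmodType) (I J : finType) (F : I * J -> V) :
  \sum_w F w = \sum_a \sum_b F (a, b).
Proof. by rewrite pair_bigA; apply: eq_bigr => -[]. Qed.

Section JointLaw.
Variables (R : realType) (n : nat).
Hypotheses (n_even : ~~ odd n) (n_pos : (0 < n)%N).

Local Notation m := (n %/ 2)%N.
Local Notation p := (@switch_prob R n).

Let mid_gt0 : (0 < m)%N := even_half_gt0 n_even n_pos.

Let n_neq0 : n%:R != 0 :> R.
Proof. by rewrite pnatr_eq0 -lt0n. Qed.

Let m_neq0 : m%:R != 0 :> R.
Proof. by rewrite pnatr_eq0 -lt0n. Qed.

Lemma switch_prob_swap_mid e i j : p (swap_mid e i j) = p e.
Proof. by rewrite /switch_prob valid_swap_mid. Qed.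

Lemma joint_probE e i j :
  joint_prob R (e, i, j) = (n * m)%:R^-1 * (if j \in Jset e i then p e else 0).
Proof.
rewrite /joint_prob; case: ifP => _; last by rewrite !mulr0.
case valid_e: (valid_config e); last by rewrite /switch_prob valid_e !mul0r mulr0.
by rewrite Jset_card // natrM invfM; ring.
Qed.

Lemma Expect_jointE (f : Omega n -> R) :
  Expect (@joint_prob R n) f = (n * m)%:R^-1 *
    \sum_i \sum_e \sum_j (if j \in Jset e i then p e * f (e, i, j) else 0).
Proof.
rewrite /Expect sum_pairE sum_pairE.
under eq_bigr do under eq_bigr do under eq_bigr do rewrite joint_probE -mulrA.
rewrite exchange_big /= mulr_sumr; apply: eq_bigr => i _.
rewrite mulr_sumr; apply: eq_bigr => e _; rewrite mulr_sumr; apply: eq_bigr => j _.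
by case: ifP; rewrite ?mul0r.
Qed.

Lemma sum_Jset e i (c : R) :
  \sum_j (if j \in Jset e i then p e * c else 0) = m%:R * (p e * c).
Proof.
rewrite -big_mkcond sumr_const mulr_natl.
case valid_e: (valid_config e); first by rewrite Jset_card.
by rewrite /switch_prob valid_e !mul0r !mul0rn.
Qed.

Lemma Expect_config (F : config n -> R) :
  Expect (@joint_prob R n) (fun w => F w.1.1) = \sum_e p e * F e.
Proof.
rewrite Expect_jointE /=.
under eq_bigr do under eq_bigr do rewrite sum_Jset.
rewrite sumr_const card_ord -mulr_sumr -mulr_natl natrM; field.
by rewrite n_neq0 m_neq0.
Qed.

Lemma sum_lit_Jset e i (c : R) :
  \sum_j (if (j \in Jset e i) && lit e i then p e * c else 0) =
  m%:R * (p e * ((lit e i)%:R * c)).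
Proof.
case: (lit e i); first by rewrite mul1r -(sum_Jset e i); apply: eq_bigr => j _; rewrite andbT.
by rewrite big1 ?mul0r ?mulr0 // => j _; rewrite andbF.
Qed.

Lemma sum_Xsw i (G : nat -> R) :
  \sum_e \sum_j (if j \in Jset e i then p e * G (Xsw (e, i, j)) else 0) =
  n%:R * \sum_e p e * ((lit e i)%:R * G (Xtot e)).
Proof.
have split_lit e j : (if j \in Jset e i then p e * G (Xsw (e, i, j)) else 0) =
    (if (j \in Jset e i) && lit e i then p e * G (Xtot e) else 0) +
    (if (j \in Jset e i) && ~~ lit e i
     then p (swap_mid e i j) * G (Xtot (swap_mid e i j)) else 0).
  rewrite /Xsw /= bulbE switch_prob_swap_mid.
  by case: (j \in Jset e i); case: (lit e i); rewrite /= ?addr0 ?add0r.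
under eq_bigr do under eq_bigr do rewrite split_lit.
under eq_bigr do rewrite big_split.
rewrite big_split /= (sum_swap_mid_flip mid_gt0 i (fun e => p e * G (Xtot e))) /=.
under eq_bigr do rewrite sum_lit_Jset.
by rewrite -mulr_sumr -mulrDl -natrD even_half_add.
Qed.

Lemma Expect_Xsw (G : nat -> R) :
  Expect (@joint_prob R n) (fun w => G (Xsw w)) =
  m%:R^-1 * \sum_e p e * ((Xtot e)%:R * G (Xtot e)).
Proof.
rewrite Expect_jointE.
under eq_bigr do rewrite sum_Xsw.
rewrite -mulr_sumr natrM invfM mulrAC mulKf // mulrC.
congr (_ * _); rewrite exchange_big /=; apply: eq_bigr => e _.
by rewrite /Xtot natr_sum mulr_suml mulr_sumr; apply: eq_bigr => i _; rewrite bulbE.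
Qed.

Lemma Expect_Xw_size_bias (g : R -> R) :
  Expect (@joint_prob R n) (fun w => (Xw w)%:R * g (Xw w)%:R) =
  Expect (@joint_prob R n) (fun w => (Xw w)%:R) *
  Expect (@joint_prob R n) (fun w => g (Xsw w)%:R).
Proof.
have E_Xw : Expect (@joint_prob R n) (fun w => (Xw w)%:R) = m%:R.
  have : Expect (@joint_prob R n) (fun=> 1) = 1.
    by rewrite (Expect_config (fun=> 1)); under eq_bigr do rewrite mulr1; exact: sum_switch_prob.
  rewrite (Expect_Xsw (fun=> 1)) (Expect_config (fun e => (Xtot e)%:R)).
  under eq_bigr do rewrite mulr1.
  by move/(congr1 ( *%R m%:R)); rewrite mulVKf // mulr1.
rewrite E_Xw (Expect_Xsw (fun k => g k%:R)) (Expect_config (fun e => (Xtot e)%:R * g (Xtot e)%:R)).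
by rewrite mulVKf.
Qed.

End JointLaw.

Theorem theorem3p1 (R : realType) (n : nat) (n_even : ~~ odd n) (n_pos : (0 < n)%N) :
  size_bias_of (@joint_prob R n) (fun w => (Xw w)%:R) (fun w => (Xsw w)%:R) /\
  (forall w : Omega n, 0 < joint_prob R w ->
     let: (e, i, j) := w in
     Xsw w = (Xw w + 2 * ((bulb e i == 0) && (bulb e j == 0)))%N /\
     (Xw w <= Xsw w <= Xw w + 2)%N).
Proof.
split; first by move=> g _ _; exact: Expect_Xw_size_bias.
move=> [[e i] j]; rewrite joint_probE //.
case hj: (j \in Jset e i); last by rewrite mulr0 ltxx.
move=> _; rewrite /Xsw /Xw (Xtot_Xconf_s (even_half_gt0 n_even n_pos) hj) !bulbE !eqb0.
by split; rewrite // leq_addr leq_add2l; case: (~~ _ && _).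
Qed.
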